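(* Let $\mathcal U$ be a universal Martin-Löf test. Then $\mathsf{LAY}_{\mathcal U}\le_{\mathrm{sW}}\mathrm{C}_{\mathbb N}$ and $\mathrm{C}_{\mathbb N}\not\le_{\mathrm W}\mathsf{LAY}_{\mathcal U}$.
   Context: Cantor space $2^\omega$, Lebesgue measure $\lambda$. A Martin-Löf (ML) test is a sequence $(\mathcal V_i)_{i\in\omega}$ of open subsets of $2^\omega$ such that $\{\langle i,\sigma\rangle:[\sigma]\subseteq\mathcal V_i\}$ is c.e. and $\lambda(\mathcal V_i)\le 2^{-i}$; it is universal if $\bigcap_i\mathcal V'_i\subseteq\bigcap_i\mathcal V_i$ for every ML-test $\mathcal V'$. $\mathrm{MLR}$ is the set of Martin-Löf random sequences. A representation of a set $X$ is a surjective partial map $\delta_X:\subseteq\omega^\omega\to X$. A realizer of a multi-valued partial function $f:\subseteq X\rightrightarrows Y$ is a partial $\Gamma:\subseteq\omega^\omega\to\omega^\omega$ with $\delta_Y(\Gamma(p))\in f(\delta_X(p))$ for all $p\in\mathrm{dom}(f\circ\delta_X)$. $f\le_{\mathrm W} g$ if there are Turing functionals $\Phi,\Psi$ such that $p\mapsto\Psi(\langle p,\Gamma(\Phi(p))\rangle)$ realizes $f$ for every realizer $\Gamma$ of $g$; $f\le_{\mathrm{sW}} g$ if instead $\Psi\circ\Gamma\circ\Phi$ realizes $f$ for every realizer $\Gamma$ of $g$. $\mathrm{MLR}$ is represented by the identity on $\mathrm{MLR}\subseteq\omega^\omega$, $\omega$ by $\chi_{\{n\}}\mapsto n$, and $\omega^\omega$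 by the identity. $\mathsf{LAY}_{\mathcal U}\colon\mathrm{MLR}\rightrightarrows\omega$, $\mathsf{LAY}_{\mathcal U}(X)=\{i:X\notin\mathcal U_i\}$. $\mathrm{C}_{\mathbb N}\colon\subseteq\omega^\omega\rightrightarrows\omega$ has domain $\{f\in\omega^\omega:\exists n\,\forall k\,(f(k)\ne n+1)\}$ and $\mathrm{C}_{\mathbb N}(f)=\omega\setminus\{n:\exists k\,(f(k)=n+1)\}$. *)

(* Computability is modelled by Kleene-style partial recursive
   functions relative to an oracle p : nat -> nat (unary, with Cantor pairing). *)
From Stdlib Require Import Arith List Cantor.
Import ListNotations.

Definition cpair (x y : nat) : nat := Cantor.to_nat (x, y).
Definition cfst (n : nat) : nat := fst (Cantor.of_nat n).
Definition csnd (n : nat) : nat := snd (Cantor.of_nat n).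

Inductive prf : Type :=
| PZero | PSucc | PId | PFst | PSnd
| POracle
| PComp (f g : prf)
| PPair (f g : prf)
| PRec (f g : prf)
| PMu (f : prf).

Inductive eval (p : nat -> nat) : prf -> nat -> nat -> Prop :=
| ev_zero x : eval p PZero x 0
| ev_succ x : eval p PSucc x (S x)
| ev_id x : eval p PId x x
| ev_fst x : eval p PFst x (cfst x)
| ev_snd x : eval p PSnd x (csnd x)
| ev_oracle x : eval p POracle x (p x)
| ev_comp f g x y z : eval p g x y -> eval p f y z -> eval p (PComp f g) x z
| ev_pair f g x a b : eval p f x a -> eval p g x b -> eval p (PPair f g) x (cpair a b)
| ev_rec0 f g x v : eval p f x v -> eval p (PRec f g) (cpair x 0) v
| ev_recS f g x n w v : eval p (PRec f g) (cpair x n) w ->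
    eval p g (cpair x (cpair n w)) v -> eval p (PRec f g) (cpair x (S n)) v
| ev_mu f x n : eval p f (cpair x n) 0 ->
    (forall m, m < n -> exists k, eval p f (cpair x m) (S k)) ->
    eval p (PMu f) x n.

Definition tf (e : prf) (p q : nat -> nat) : Prop :=
  forall n, eval p e n (q n).

Definition ce (S : nat -> Prop) : Prop :=
  exists e : prf, forall n, S n <-> exists v, eval (fun _ => 0) e n v.

Definition cantor := nat -> bool.
Definition baire := nat -> nat.

Fixpoint code (s : list bool) : nat :=
  match s with
  | [] => 0
  | b :: s' => 2 * code s' + (if b then 2 else 1)
  end.

Definition cyl (s : list bool) : cantor -> Prop :=
  fun X => forall k, k < length s -> X k = nth k s false.

Definition subset (A B : cantor -> Prop) : Prop := forall X, A X -> B X.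

Definition is_open (V : cantor -> Prop) : Prop :=
  forall X, V X -> exists n, forall Y, (forall k, k < n -> Y k = X k) -> V Y.

(** Lebesgue measure of an open set V is sup_n (#{s : |s| = n, [s] ⊆ V}) / 2^n.
    [measure_open_le_pow2 V i] says lambda(V) <= 2^-i. *)
Definition measure_open_le_pow2 (V : cantor -> Prop) (i : nat) : Prop :=
  forall (n : nat) (L : list (list bool)), NoDup L ->
    (forall s, In s L -> length s = n /\ subset (cyl s) V) ->
    length L * 2 ^ i <= 2 ^ n.

Definition ML_test (V : nat -> cantor -> Prop) : Prop :=
  (forall i, is_open (V i)) /\
  ce (fun m => exists i s, m = cpair i (code s) /\ subset (cyl s) (V i)) /\
  (forall i, measure_open_le_pow2 (V i) i).

Definition bigcap (V : nat -> cantor -> Prop) : cantor -> Prop :=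
  fun X => forall i, V i X.

Definition universal_ML_test (U : nat -> cantor -> Prop) : Prop :=
  ML_test U /\ forall V, ML_test V -> subset (bigcap V) (bigcap U).

Definition MLR (X : cantor) : Prop :=
  forall V, ML_test V -> ~ bigcap V X.

(** Represented spaces: a representation is a relation [rep p x] : p names x. *)
Definition b2n (b : bool) : nat := if b then 1 else 0.

Definition rep_MLR (p : baire) (X : cantor) : Prop :=
  MLR X /\ forall n, p n = b2n (X n).

Definition rep_nat (p : baire) (n : nat) : Prop :=
  forall m, p m = (if Nat.eqb m n then 1 else 0).

Definition rep_baire (p : baire) (f : baire) : Prop := p = f.

(** A (multi-valued, partial) function f :⊆ X ⇉ Y is given by its domain [dom]
    and its value relation [f x y] (y ∈ f(x)).  A partial function
    Γ :⊆ ω^ω → ω^ω is a functional relation [G p q] (Γ(p) = q). *)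
Definition functional_rel (G : baire -> baire -> Prop) : Prop :=
  forall p q q', G p q -> G p q' -> q = q'.

Definition realizes {X Y : Type} (repX : baire -> X -> Prop) (repY : baire -> Y -> Prop)
  (dom : X -> Prop) (f : X -> Y -> Prop) (G : baire -> baire -> Prop) : Prop :=
  forall p x, repX p x -> dom x ->
    (exists q, G p q) /\ (forall q, G p q -> exists y, repY q y /\ f x y).

Definition is_realizer {X Y : Type} (repX : baire -> X -> Prop) (repY : baire -> Y -> Prop)
  (dom : X -> Prop) (f : X -> Y -> Prop) (G : baire -> baire -> Prop) : Prop :=
  functional_rel G /\ realizes repX repY dom f G.

Definition join (p q : baire) : baire :=
  fun n => if Nat.even n then p (Nat.div2 n) else q (Nat.div2 n).

Definition W_le {X Y Z W : Type}
  (repX : baire -> X -> Prop) (repY : baire -> Y -> Prop) (domf : X -> Prop) (f : X -> Y -> Prop)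
  (repZ : baire -> Z -> Prop) (repW : baire -> W -> Prop) (domg : Z -> Prop) (g : Z -> W -> Prop)
  : Prop :=
  exists Phi Psi : prf, forall G, is_realizer repZ repW domg g G ->
    realizes repX repY domf f
      (fun p r => exists q s, tf Phi p q /\ G q s /\ tf Psi (join p s) r).

Definition sW_le {X Y Z W : Type}
  (repX : baire -> X -> Prop) (repY : baire -> Y -> Prop) (domf : X -> Prop) (f : X -> Y -> Prop)
  (repZ : baire -> Z -> Prop) (repW : baire -> W -> Prop) (domg : Z -> Prop) (g : Z -> W -> Prop)
  : Prop :=
  exists Phi Psi : prf, forall G, is_realizer repZ repW domg g G ->
    realizes repX repY domf f
      (fun p r => exists q s, tf Phi p q /\ G q s /\ tf Psi s r).

Definition LAY_dom (X : cantor) : Prop := MLR X.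
Definition LAY (U : nat -> cantor -> Prop) (X : cantor) (i : nat) : Prop := ~ U i X.

Definition CN_dom (f : baire) : Prop := exists n, forall k, f k <> S n.
Definition CN (f : baire) (n : nat) : Prop := forall k, f k <> S n.

(* A name of X computes, uniformly in X, an enumeration of the levels {n | X ∈ U n}:
   simulate the c.e. description of the cylinders of U with a clock and list n whenever
   it confirms [X|N] ⊆ U n. A random X escapes some level, so this is an instance of C_N,
   and every solution is a level avoiding X; the output needs no further processing.
   Conversely, C_N has the computable instance 0^ω, on which a reduction of C_N to LAY_U
   would compute a name of a random sequence. But a computable X is caught by the
   ML test whose i-th level is the cylinder [X|i]. *)

From Stdlib Require Import Arith List Lia Cantor Wf_nat.
From Stdlib Require Import Classical FunctionalExtensionality ClassicalEpsilon.
Import ListNotations.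

(** * Oracle programs *)

Lemma cfst_pair a b : cfst (cpair a b) = a.
Proof. unfold cfst, cpair. now rewrite Cantor.cancel_of_to. Qed.

Lemma csnd_pair a b : csnd (cpair a b) = b.
Proof. unfold csnd, cpair. now rewrite Cantor.cancel_of_to. Qed.

Lemma cpair_surj n : cpair (cfst n) (csnd n) = n.
Proof. unfold cfst, csnd, cpair. rewrite <- surjective_pairing. apply Cantor.cancel_to_of. Qed.

Lemma cpair_inj a b c d : cpair a b = cpair c d -> a = c /\ b = d.
Proof.
  intro E. split.
  - now rewrite <- (cfst_pair a b), E, cfst_pair.
  - now rewrite <- (csnd_pair a b), E, csnd_pair.
Qed.

Opaque cpair cfst csnd.
Hint Rewrite cfst_pair csnd_pair : cpair.

Lemma tf_ext e p F G : tf e p F -> (forall x, F x = G x) -> tf e p G.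
Proof. intros H E x. rewrite <- E. apply H. Qed.

Lemma tf_zero p : tf PZero p (fun _ => 0).
Proof. intro; constructor. Qed.

Lemma tf_succ p : tf PSucc p S.
Proof. intro; constructor. Qed.

Lemma tf_id p : tf PId p (fun x => x).
Proof. intro; constructor. Qed.

Lemma tf_fst p : tf PFst p cfst.
Proof. intro; constructor. Qed.

Lemma tf_snd p : tf PSnd p csnd.
Proof. intro; constructor. Qed.

Lemma tf_oracle p : tf POracle p p.
Proof. intro; constructor. Qed.

Lemma tf_comp p f g F G : tf f p F -> tf g p G -> tf (PComp f g) p (fun x => F (G x)).
Proof. intros Hf Hg x. econstructor; eauto. Qed.

Lemma tf_pair p f g F G :
  tf f p F -> tf g p G -> tf (PPair f g) p (fun x => cpair (F x) (G x)).
Proof. intros Hf Hg x. econstructor; eauto. Qed.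

Fixpoint prim_rec (F G : nat -> nat) (x n : nat) : nat :=
  match n with
  | 0 => F x
  | S n' => G (cpair x (cpair n' (prim_rec F G x n')))
  end.

Lemma tf_rec p f g F G :
  tf f p F -> tf g p G -> tf (PRec f g) p (fun z => prim_rec F G (cfst z) (csnd z)).
Proof.
  intros Hf Hg z.
  assert (H : forall x n, eval p (PRec f g) (cpair x n) (prim_rec F G x n)).
  { intros x n; induction n; simpl; econstructor; eauto. }
  specialize (H (cfst z) (csnd z)). now rewrite cpair_surj in H.
Qed.

(* Derived programs get priority 0, so that [eauto] uses their specifications
   instead of unfolding them. *)
Create HintDb tf discriminated.
#[export] Hint Resolve tf_zero tf_succ tf_id tf_fst tf_snd tf_oracle | 2 : tf.
#[export] Hint Resolve tf_comp tf_pair tf_rec | 2 : tf.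

Ltac tf_program := eapply tf_ext; [solve [eauto 200 with tf] | intro; cbv beta].

Definition PCond (h0 h1 : prf) : prf := PRec h0 (PComp h1 (PPair PFst (PComp PFst PSnd))).

Lemma tf_cond p h0 h1 F0 F1 : tf h0 p F0 -> tf h1 p F1 ->
  tf (PCond h0 h1) p
    (fun z => match csnd z with 0 => F0 (cfst z) | S n => F1 (cpair (cfst z) n) end).
Proof.
  intros H0 H1. unfold PCond. tf_program.
  destruct (csnd _); simpl; now autorewrite with cpair.
Qed.

Definition PCase (a h0 h1 : prf) : prf := PComp (PCond h0 h1) (PPair PId a).

Lemma tf_case p a h0 h1 A F0 F1 : tf a p A -> tf h0 p F0 -> tf h1 p F1 ->
  tf (PCase a h0 h1) p (fun z => match A z with 0 => F0 z | S n => F1 (cpair z n) end).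
Proof.
  intros Ha H0 H1. unfold PCase. eapply tf_ext.
  - apply tf_comp; [apply tf_cond; eassumption | apply tf_pair; [apply tf_id | eassumption]].
  - intro z. cbv beta. now autorewrite with cpair.
Qed.

#[export] Hint Resolve tf_cond tf_case | 0 : tf.

Definition POne : prf := PComp PSucc PZero.
Definition PPred : prf := PComp (PRec PZero (PComp PFst PSnd)) (PPair PZero PId).
Definition PAdd : prf := PRec PId (PComp PSucc (PComp PSnd PSnd)).
Definition PMul : prf := PRec PZero (PComp PAdd (PPair (PComp PSnd PSnd) PFst)).
Definition PSub : prf := PRec PId (PComp PPred (PComp PSnd PSnd)).
Definition PDist : prf := PComp PAdd (PPair PSub (PComp PSub (PPair PSnd PFst))).

Lemma tf_one p : tf POne p (fun _ => 1).
Proof. unfold POne. now tf_program. Qed.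

Lemma tf_pred p : tf PPred p pred.
Proof.
  unfold PPred. tf_program. autorewrite with cpair.
  destruct x; simpl; now autorewrite with cpair.
Qed.

#[export] Hint Resolve tf_one tf_pred | 0 : tf.

Lemma tf_add p : tf PAdd p (fun z => cfst z + csnd z).
Proof.
  unfold PAdd. tf_program. generalize (cfst x) (csnd x). intros a n.
  induction n; simpl; autorewrite with cpair; lia.
Qed.

#[export] Hint Resolve tf_add | 0 : tf.

Lemma tf_mul p : tf PMul p (fun z => cfst z * csnd z).
Proof.
  unfold PMul. tf_program. generalize (cfst x) (csnd x). intros a n.
  induction n; simpl; autorewrite with cpair; lia.
Qed.

Lemma tf_sub p : tf PSub p (fun z => cfst z - csnd z).
Proof.
  unfold PSub. tf_program. generalize (cfst x) (csnd x). intros a n.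
  induction n; simpl; autorewrite with cpair; lia.
Qed.

#[export] Hint Resolve tf_mul tf_sub | 0 : tf.

Lemma tf_dist p : tf PDist p (fun z => (cfst z - csnd z) + (csnd z - cfst z)).
Proof. unfold PDist. tf_program. now autorewrite with cpair. Qed.

#[export] Hint Resolve tf_dist | 0 : tf.

(** * Evaluation with a clock *)

Definition zero_oracle : baire := fun _ => 0.

Fixpoint rec_run (Rf Rg : nat -> option nat) (x n : nat) : option nat :=
  match n with
  | 0 => Rf x
  | S n' =>
      match rec_run Rf Rg x n' with
      | Some w => Rg (cpair x (cpair n' w))
      | None => None
      end
  end.

(* State of the search for the least [k] with [R <x, k> = Some 0] after the
   candidates [k < m]: [0] once a test was undefined, [1] while all tests were
   positive, [k + 2] once [k] was found. *)
Fixpoint mu_search (R : nat -> option nat) (x m : nat) : nat :=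
  match m with
  | 0 => 1
  | S m' =>
      match mu_search R x m' with
      | 1 => match R (cpair x m') with Some 0 => S (S m') | Some (S _) => 1 | None => 0 end
      | s => s
      end
  end.

Definition mu_result (s : nat) : option nat :=
  match s with S (S k) => Some k | _ => None end.

(* Evaluation of [e] relative to [zero_oracle] in which every minimisation
   inspects only candidates below the fuel [t]. *)
Fixpoint run (e : prf) (t x : nat) : option nat :=
  match e with
  | PZero => Some 0
  | PSucc => Some (S x)
  | PId => Some x
  | PFst => Some (cfst x)
  | PSnd => Some (csnd x)
  | POracle => Some 0
  | PComp f g => match run g t x with Some y => run f t y | None => None end
  | PPair f g =>
      match run f t x, run g t x with
      | Some a, Some b => Some (cpair a b)
      | _, _ => None
      end
  | PRec f g => rec_run (run f t) (run g t) (cfst x) (csnd x)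
  | PMu f => mu_result (mu_search (run f t) x t)
  end.

Section MuSearch.
Variables (R : nat -> option nat) (x : nat).

Definition positive_below (k : nat) : Prop :=
  forall j, j < k -> exists r, R (cpair x j) = Some (S r).

Lemma mu_search_cases m :
  mu_search R x m = 0 \/ (mu_search R x m = 1 /\ positive_below m) \/
  exists k, mu_search R x m = S (S k) /\ k < m /\ R (cpair x k) = Some 0 /\ positive_below k.
Proof.
  induction m as [|m IH]; simpl.
  - right; left. split; [reflexivity | intros j Hj; lia].
  - destruct IH as [H | [[H Hpos] | [k [H [Hk [H0 Hpos]]]]]]; rewrite H.
    + now left.
    + destruct (R (cpair x m)) as [[|r]|] eqn:E.
      * right; right. exists m. auto.
      * right; left. split; [reflexivity|].
        intros j Hj. destruct (Nat.eq_dec j m) as [->|]; [eauto | apply Hpos; lia].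
      * now left.
    + right; right. exists k. auto.
Qed.

Lemma mu_search_found_inv m k : mu_search R x m = S (S k) ->
  k < m /\ R (cpair x k) = Some 0 /\ positive_below k.
Proof.
  intro H. destruct (mu_search_cases m) as [H' | [[H' _] | [k' [H' Hk']]]];
    rewrite H in H'; try discriminate.
  now injection H' as ->.
Qed.

Lemma mu_search_positive m : positive_below m -> mu_search R x m = 1.
Proof.
  induction m as [|m IH]; intro Hpos; simpl; [reflexivity|].
  rewrite IH by (intros j Hj; apply Hpos; lia).
  destruct (Hpos m) as [r ->]; [lia | reflexivity].
Qed.

Lemma mu_search_found m k : k < m -> R (cpair x k) = Some 0 -> positive_below k ->
  mu_search R x m = S (S k).
Proof.
  induction m as [|m IH]; intros Hk H0 Hpos; [lia|]. simpl.
  destruct (Nat.eq_dec k m) as [->|].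
  - now rewrite mu_search_positive, H0.
  - now rewrite IH by (auto; lia).
Qed.

End MuSearch.

Lemma run_sound e : forall t x v, run e t x = Some v -> eval zero_oracle e x v.
Proof.
  induction e; intros t x v H; simpl in H; try (injection H as <-; constructor).
  - destruct (run e2 t x) eqn:E; [econstructor; eauto | discriminate].
  - destruct (run e1 t x) eqn:E1, (run e2 t x) eqn:E2; try discriminate.
    injection H as <-. econstructor; eauto.
  - rewrite <- (cpair_surj x). revert v H. generalize (cfst x) (csnd x). intros y n.
    induction n; simpl; intros v H.
    + constructor. eauto.
    + destruct (rec_run _ _ y n) eqn:E; [econstructor; eauto | discriminate].
  - unfold mu_result in H. destruct (mu_search (run e t) x t) as [|[|k]] eqn:E; try discriminate.
    injection H as <-. apply mu_search_found_inv in E as [_ [H0 Hpos]].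
    constructor; eauto. intros m Hm. destruct (Hpos m Hm) as [r Hr]. eauto.
Qed.

Lemma rec_run_mono e1 e2 t t' y n w :
  (forall x v, run e1 t x = Some v -> run e1 t' x = Some v) ->
  (forall x v, run e2 t x = Some v -> run e2 t' x = Some v) ->
  rec_run (run e1 t) (run e2 t) y n = Some w -> rec_run (run e1 t') (run e2 t') y n = Some w.
Proof.
  intros H1 H2. revert w. induction n; simpl; intros w H; auto.
  destruct (rec_run (run e1 t) _ y n) eqn:E; [|discriminate].
  erewrite IHn by eauto. auto.
Qed.

Lemma run_mono e : forall t t' x v, t <= t' -> run e t x = Some v -> run e t' x = Some v.
Proof.
  induction e; intros t t' x v Ht H; simpl in *; auto.
  - destruct (run e2 t x) eqn:E; [|discriminate]. erewrite IHe2; eauto.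
  - destruct (run e1 t x) eqn:E1, (run e2 t x) eqn:E2; try discriminate.
    injection H as <-. erewrite IHe1, IHe2; eauto.
  - eapply rec_run_mono; [intros; eapply IHe1 | intros; eapply IHe2 | ]; eauto.
  - unfold mu_result in *. destruct (mu_search (run e t) x t) as [|[|k]] eqn:E; try discriminate.
    injection H as <-. apply mu_search_found_inv in E as [Hk [H0 Hpos]].
    rewrite (mu_search_found _ _ _ k); [reflexivity | lia | eauto |].
    intros j Hj. destruct (Hpos j Hj) as [r Hr]. eauto.
Qed.

Lemma uniform_bound (P : nat -> nat -> Prop) n :
  (forall m t t', t <= t' -> P m t -> P m t') -> (forall m, m < n -> exists t, P m t) ->
  exists T, forall m, m < n -> P m T.
Proof.
  intros Hmono. induction n as [|n IH]; intro H.
  - exists 0. intros m Hm. lia.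
  - destruct IH as [T HT]; [intros m Hm; apply H; lia|].
    destruct (H n) as [t Ht]; [lia|].
    exists (max T t). intros m Hm. destruct (Nat.eq_dec m n) as [->|].
    + eapply Hmono; [|eauto]. lia.
    + eapply Hmono; [|apply HT; lia]. lia.
Qed.

Lemma run_complete e x v : eval zero_oracle e x v -> exists t, run e t x = Some v.
Proof.
  revert x v. induction e; intros x v H.
  1-6: inversion H; subst; now exists 0.
  - inversion H as [| | | | | | ? ? ? y ? Hg Hf | | | |]; subst.
    destruct (IHe2 _ _ Hg) as [t1 E1], (IHe1 _ _ Hf) as [t2 E2].
    exists (max t1 t2). simpl. erewrite (run_mono e2 t1) by (eauto; lia).
    eapply run_mono; [|eauto]. lia.
  - inversion H as [| | | | | | | ? ? ? ? ? Hf Hg | | |]; subst.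
    destruct (IHe1 _ _ Hf) as [t1 E1], (IHe2 _ _ Hg) as [t2 E2].
    exists (max t1 t2). simpl.
    erewrite (run_mono e1 t1), (run_mono e2 t2) by (eauto; lia). reflexivity.
  - remember (PRec e1 e2) as E. induction H; try discriminate; injection HeqE as -> ->.
    + destruct (IHe1 _ _ H) as [t Ht]. exists t. simpl. now autorewrite with cpair.
    + destruct (IHeval1 eq_refl) as [t1 E1], (IHe2 _ _ H0) as [t2 E2].
      exists (max t1 t2).
      assert (E1' := run_mono _ t1 (max t1 t2) _ _ ltac:(lia) E1).
      simpl in E1' |- *. autorewrite with cpair in E1' |- *. cbn [rec_run]. rewrite E1'.
      eapply run_mono; [|eauto]. lia.
  - inversion H as [| | | | | | | | | | ? ? n H0 Hpos]; subst.
    destruct (IHe _ _ H0) as [t0 E0].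
    destruct (uniform_bound (fun m t => exists k, run e t (cpair x m) = Some (S k)) v) as [T HT].
    + intros m t t' Ht [k Hk]. exists k. eapply run_mono; eauto.
    + intros m Hm. destruct (Hpos m Hm) as [k Hk]. destruct (IHe _ _ Hk) as [t Ht]. eauto.
    + exists (max T (max t0 (S v))). simpl.
      rewrite (mu_search_found _ _ _ v); [reflexivity | lia | |].
      * eapply run_mono; [|eauto]. lia.
      * intros j Hj. destruct (HT j Hj) as [k Hk]. exists k. eapply run_mono; [|eauto]. lia.
Qed.

Lemma eval_rec_inv p f g z v : eval p (PRec f g) z v ->
  (exists x, z = cpair x 0 /\ eval p f x v) \/
  (exists x n w, z = cpair x (S n) /\ eval p (PRec f g) (cpair x n) w /\
                 eval p g (cpair x (cpair n w)) v).
Proof.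
  intro H. remember (PRec f g) as E.
  destruct H; try discriminate; injection HeqE as -> ->; [left | right]; eauto 10.
Qed.

Lemma eval_det p e : forall x v v', eval p e x v -> eval p e x v' -> v = v'.
Proof.
  induction e as [| | | | | | f IHf g IHg | f IHf g IHg | f IHf g IHg | f IHf];
    intros x v v' H H'.
  1-6: inversion H; inversion H'; now subst.
  - inversion H as [| | | | | | ? ? ? y ? Hg Hf | | | |]; subst.
    inversion H' as [| | | | | | ? ? ? y' ? Hg' Hf' | | | |]; subst.
    rewrite (IHg _ _ _ Hg Hg') in Hf. exact (IHf _ _ _ Hf Hf').
  - inversion H as [| | | | | | | ? ? ? a b Hf Hg | | |]; subst.
    inversion H' as [| | | | | | | ? ? ? a' b' Hf' Hg' | | |]; subst.
    now rewrite (IHf _ _ _ Hf Hf'), (IHg _ _ _ Hg Hg').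
  - revert v' H'. remember (PRec f g) as E.
    induction H as [| | | | | | | | ? ? x v Hf | ? ? x n w v Hr IHr Hg |];
      try discriminate; injection HeqE as -> ->; intros v' H'.
    + destruct (eval_rec_inv _ _ _ _ _ H') as [[x' [E Hf']] | [x' [n' [w' [E _]]]]];
        apply cpair_inj in E as [<- E]; [exact (IHf _ _ _ Hf Hf') | discriminate].
    + destruct (eval_rec_inv _ _ _ _ _ H') as [[x' [E _]] | [x' [n' [w' [E [Hr' Hg']]]]]];
        apply cpair_inj in E as [<- E]; [discriminate|].
      injection E as <-. rewrite <- (IHr eq_refl _ Hr') in Hg'. exact (IHg _ _ _ Hg Hg').
  - inversion H as [| | | | | | | | | | ? ? ? H0 Hpos]; subst.
    inversion H' as [| | | | | | | | | | ? ? ? H0' Hpos']; subst.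
    destruct (Nat.lt_trichotomy v v') as [Hlt | [-> | Hlt]]; auto.
    + destruct (Hpos' v Hlt) as [k Hk]. now specialize (IHf _ _ _ H0 Hk).
    + destruct (Hpos v' Hlt) as [k Hk]. now specialize (IHf _ _ _ H0' Hk).
Qed.

Definition enc (o : option nat) : nat := match o with Some v => S v | None => 0 end.

(* Projections of [<<<t, y>, <n, w>>, v>], the input of the recursion steps below. *)
Definition PFuel : prf := PComp PFst (PComp PFst PFst).
Definition PArg : prf := PComp PSnd (PComp PFst PFst).
Definition PIndex : prf := PComp PFst (PComp PSnd PFst).

(* Since [enc (mu_result s) = pred s], the [PMu] clause iterates the step of
   [mu_search] and decodes with [PPred]. *)
Fixpoint PRun (e : prf) : prf :=
  match e with
  | PZero => POne
  | PSucc => PComp PSucc (PComp PSucc PSnd)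
  | PId => PComp PSucc PSnd
  | PFst => PComp PSucc (PComp PFst PSnd)
  | PSnd => PComp PSucc (PComp PSnd PSnd)
  | POracle => POne
  | PComp f g => PCase (PRun g) PZero (PComp (PRun f) (PPair (PComp PFst PFst) PSnd))
  | PPair f g =>
      PCase (PRun f) PZero
        (PCase (PComp (PRun g) PFst) PZero (PComp PSucc (PPair (PComp PSnd PFst) PSnd)))
  | PRec f g =>
      PComp
        (PRec (PRun f)
           (PCase (PComp PSnd PSnd) PZero
              (PComp (PRun g) (PPair PFuel (PPair PArg (PPair PIndex PSnd))))))
        (PPair (PPair PFst (PComp PFst PSnd)) (PComp PSnd PSnd))
  | PMu f =>
      PComp PPred
        (PComp
           (PRec POne
              (PCase (PComp PSnd PSnd) PZero
                 (PCase PSnd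
                    (PCase (PComp (PRun f) (PPair PFuel (PPair PArg PIndex))) PZero
                       (PCase PSnd
                          (PComp PSucc (PComp PSucc (PComp PFst (PComp PSnd (PComp PFst PFst)))))
                          POne))
                    (PComp PSucc (PComp PSucc PSnd)))))
           (PPair PId PFst))
  end.

Lemma tf_run e p : tf (PRun e) p (fun z => enc (run e (cfst z) (csnd z))).
Proof.
  induction e; simpl PRun.
  1-6: now tf_program.
  - tf_program. simpl run. destruct (run e2 _ _); simpl; now autorewrite with cpair.
  - tf_program. simpl run.
    destruct (run e1 _ _); simpl; autorewrite with cpair; [|reflexivity].
    destruct (run e2 _ _); simpl; now autorewrite with cpair.
  - tf_program. simpl run. autorewrite with cpair.
    generalize (csnd (csnd x)). intro n. induction n; simpl; autorewrite with cpair; [reflexivity|].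
    rewrite IHn. destruct (rec_run _ _ _ n); simpl; now autorewrite with cpair.
  - tf_program. simpl run. autorewrite with cpair.
    match goal with |- pred (prim_rec ?F ?G x _) = _ =>
      assert (H : forall m, prim_rec F G x m = mu_search (run e (cfst x)) (csnd x) m) end.
    { intro m; induction m; [reflexivity|]. simpl prim_rec. rewrite IHm. cbv beta.
      autorewrite with cpair. simpl mu_search.
      destruct (mu_search (run e (cfst x)) (csnd x) m) as [|[|s]]; cbv beta iota;
        autorewrite with cpair; cbv beta iota; try reflexivity.
      destruct (run e (cfst x) (cpair (csnd x) m)) as [[|r]|]; unfold enc; cbv beta iota;
        autorewrite with cpair; cbv beta iota; now autorewrite with cpair. }
    rewrite H. now destruct (mu_search _ _ _) as [|[|s]].
Qed.

#[export] Hint Resolve tf_run | 0 : tf.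

(** * Binary strings and their codes *)

Definition prefix (X : cantor) (N : nat) : list bool := map X (seq 0 N).

Lemma length_prefix X N : length (prefix X N) = N.
Proof. unfold prefix. now rewrite length_map, length_seq. Qed.

Lemma nth_prefix X N k : k < N -> nth k (prefix X N) false = X k.
Proof.
  intro Hk. unfold prefix.
  rewrite nth_indep with (d' := X 0) by (rewrite length_map, length_seq; lia).
  now rewrite map_nth, seq_nth by lia.
Qed.

Lemma prefix_S X N : prefix X (S N) = prefix X N ++ [X N].
Proof. unfold prefix. now rewrite seq_S, map_app. Qed.

Lemma cyl_prefix X N : cyl (prefix X N) X.
Proof. intros k Hk. rewrite length_prefix in Hk. now rewrite nth_prefix. Qed.

Lemma code_app s1 s2 : code (s1 ++ s2) = code s1 + 2 ^ length s1 * code s2.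
Proof. induction s1 as [|[] s1 IH]; simpl; rewrite ?IH; lia. Qed.

Lemma code_inj s1 s2 : code s1 = code s2 -> s1 = s2.
Proof.
  revert s2. induction s1 as [|a s1 IH]; intros [|b s2]; simpl; intro H.
  - reflexivity.
  - destruct b; lia.
  - destruct a; lia.
  - destruct a, b; try lia; f_equal; apply IH; lia.
Qed.

Lemma code_surj c : exists s, code s = c.
Proof.
  induction c as [c IH] using (well_founded_induction lt_wf).
  destruct c as [|c]; [now exists []|].
  destruct (Nat.Even_or_Odd c) as [[k Hk] | [k Hk]];
    destruct (IH k ltac:(lia)) as [s Hs].
  - exists (false :: s). simpl. lia.
  - exists (true :: s). simpl. lia.
Qed.

Fixpoint prefix_code (b : baire) (N : nat) : nat * nat :=
  match N with
  | 0 => (0, 1)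
  | S j => let (c, w) := prefix_code b j in (c + w * S (b j), w + w)
  end.

Lemma prefix_code_spec b X N : (forall j, b j = b2n (X j)) ->
  prefix_code b N = (code (prefix X N), 2 ^ N).
Proof.
  intro Hb. induction N as [|N IH]; [reflexivity|]. cbn [prefix_code]. rewrite IH, Hb.
  rewrite prefix_S, code_app, length_prefix. destruct (X N); simpl; f_equal; lia.
Qed.

Definition PPrefixCode (B : prf) : prf :=
  PComp
    (PRec (PPair PZero POne)
       (PPair
          (PComp PAdd (PPair (PComp PFst (PComp PSnd PSnd))
             (PComp PMul (PPair (PComp PSnd (PComp PSnd PSnd))
                                (PComp PSucc (PComp B (PComp PFst PSnd)))))))
          (PComp PAdd (PPair (PComp PSnd (PComp PSnd PSnd)) (PComp PSnd (PComp PSnd PSnd))))))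
    (PPair PZero PId).

Lemma tf_prefix_code p B b : tf B p b ->
  tf (PPrefixCode B) p (fun N => cpair (fst (prefix_code b N)) (snd (prefix_code b N))).
Proof.
  intro HB. unfold PPrefixCode. tf_program. autorewrite with cpair.
  induction x as [|N IH]; simpl; [reflexivity|]. rewrite IH. autorewrite with cpair.
  now destruct (prefix_code b N).
Qed.

#[export] Hint Resolve tf_prefix_code | 0 : tf.

(** * Reduction of LAY_U to C_N *)

Lemma tf_det e p q q' : tf e p q -> tf e p q' -> q = q'.
Proof.
  intros H H'. apply functional_extensionality. intro n.
  exact (eval_det _ _ _ _ _ (H n) (H' n)).
Qed.

Lemma MLR_escapes_test U X : ML_test U -> MLR X -> exists i, ~ U i X.
Proof. intros HU HX. apply not_all_ex_not. exact (HX U HU). Qed.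

Section LayerEnumeration.
Variables (U : nat -> cantor -> Prop) (e : prf).
Hypothesis U_open : forall i, is_open (U i).
Hypothesis e_enumerates : forall m,
  (exists i s, m = cpair i (code s) /\ subset (cyl s) (U i)) <->
  exists v, eval zero_oracle e m v.

(* At [<n, <N, t>>]: [n + 1] if [e], given fuel [t], certifies that the cylinder of the
   first [N] bits named by [p] lies in [U n]; otherwise [0]. *)
Definition layer_enum (p : baire) (k : nat) : nat :=
  match run e (csnd (csnd k)) (cpair (cfst k) (fst (prefix_code p (cfst (csnd k))))) with
  | Some _ => S (cfst k)
  | None => 0
  end.

Definition PLayerEnum : prf :=
  PCase
    (PComp (PRun e)
       (PPair (PComp PSnd PSnd)
          (PPair PFst (PComp PFst (PComp (PPrefixCode POracle) (PComp PFst PSnd))))))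
    PZero (PComp PSucc (PComp PFst PFst)).

Lemma tf_layer_enum p : tf PLayerEnum p (layer_enum p).
Proof.
  unfold PLayerEnum. tf_program. unfold layer_enum. autorewrite with cpair.
  destruct (run e _ _); simpl; now autorewrite with cpair.
Qed.

Variables (p : baire) (X : cantor).
Hypothesis p_names_X : forall n, p n = b2n (X n).

Lemma layer_enum_sound k n : layer_enum p k = S n -> U n X.
Proof.
  unfold layer_enum. destruct (run e _ _) as [v|] eqn:Hrun; [|discriminate].
  intros [= <-]. apply run_sound in Hrun.
  destruct (proj2 (e_enumerates _) (ex_intro _ v Hrun)) as [i [s [E Hs]]].
  apply cpair_inj in E as [<- Ec]. rewrite (prefix_code_spec _ X) in Ec by assumption.
  apply code_inj in Ec as <-. apply Hs, cyl_prefix.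
Qed.

Lemma layer_enum_complete n : U n X -> exists k, layer_enum p k = S n.
Proof.
  intro Hn. destruct (U_open n X Hn) as [N HN].
  assert (Hcyl : subset (cyl (prefix X N)) (U n)).
  { intros Y HY. apply HN. intros k Hk. rewrite HY by (now rewrite length_prefix).
    now apply nth_prefix. }
  destruct (proj1 (e_enumerates (cpair n (code (prefix X N)))) (ex_intro _ n (ex_intro _ _
    (conj eq_refl Hcyl)))) as [v Hv].
  destruct (run_complete _ _ _ Hv) as [t Ht].
  exists (cpair n (cpair N t)). unfold layer_enum. autorewrite with cpair.
  rewrite (prefix_code_spec _ X) by assumption. simpl. now rewrite Ht.
Qed.

End LayerEnumeration.

Lemma LAY_sW_CN U : ML_test U ->
  sW_le rep_MLR rep_nat LAY_dom (LAY U) rep_baire rep_nat CN_dom CN.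
Proof.
  intro HU. pose proof HU as [U_open [[e He] _]].
  exists (PLayerEnum e), POracle. intros G [_ G_realizes] p X [HX Hp] _.
  set (q := layer_enum e p).
  assert (Hq : tf (PLayerEnum e) p q) by apply tf_layer_enum.
  assert (Hdom : CN_dom q).
  { destruct (MLR_escapes_test U X HU HX) as [i Hi]. exists i. intros k Hk.
    exact (Hi (layer_enum_sound U e He p X Hp k i Hk)). }
  destruct (G_realizes q q eq_refl Hdom) as [[s Hs] Hout]. split.
  - exists s, q, s. repeat split; auto. apply tf_oracle.
  - intros r [q' [s' [Hq' [Hs' Hr]]]].
    rewrite (tf_det _ _ _ _ Hq' Hq), <- (tf_det _ _ _ _ Hr (tf_oracle s')) in Hs'.
    destruct (Hout r Hs') as [i [Hi Hcn]]. exists i. split; [exact Hi|].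
    intro HUi. destruct (layer_enum_complete U e U_open He p X Hp i HUi) as [k Hk].
    exact (Hcn k Hk).
Qed.

(** * Computable sequences are not random *)

Lemma eval_mu_iff p f F x : tf f p F ->
  (exists v, eval p (PMu f) x v) <-> exists n, F (cpair x n) = 0.
Proof.
  intro Hf. split.
  - intros [v Hv]. inversion Hv as [| | | | | | | | | | ? ? ? H0 _]; subst.
    exists v. exact (eval_det _ _ _ _ _ (Hf _) H0).
  - intro Hex.
    destruct (dec_inh_nat_subset_has_unique_least_element (fun n => F (cpair x n) = 0))
      as [n [[H0 Hleast] _]]; [intro n; apply Nat.eq_decidable | exact Hex |].
    exists n. constructor.
    + rewrite <- H0. apply Hf.
    + intros m Hm. destruct (F (cpair x m)) as [|k] eqn:E.
      * specialize (Hleast m E). lia.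
      * exists k. rewrite <- E. apply Hf.
Qed.

Definition prefix_test (X : cantor) (i : nat) : cantor -> Prop :=
  fun Y => forall k, k < i -> Y k = X k.

Lemma subset_cyl_prefix_test X i s :
  subset (cyl s) (prefix_test X i) <-> exists t, s = prefix X i ++ t.
Proof.
  split.
  - intro Hsub.
    set (Y := fun k => if k <? length s then nth k s false else negb (X k)).
    assert (HY : cyl s Y).
    { intros k Hk. unfold Y. now rewrite (proj2 (Nat.ltb_lt _ _) Hk). }
    specialize (Hsub Y HY).
    assert (Hlen : i <= length s).
    { destruct (le_lt_dec i (length s)) as [|Hlt]; [assumption|].
      specialize (Hsub _ Hlt). unfold Y in Hsub. rewrite Nat.ltb_irrefl in Hsub.
      now destruct (X (length s)). }
    exists (skipn i s). rewrite <- (firstn_skipn i s) at 1. f_equal.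
    apply nth_ext with (d := false) (d' := false).
    + now rewrite length_firstn, length_prefix, Nat.min_l.
    + intros k Hk. rewrite length_firstn, Nat.min_l in Hk by assumption.
      rewrite nth_firstn, (proj2 (Nat.ltb_lt _ _) Hk), nth_prefix by assumption.
      rewrite <- (Hsub k Hk). unfold Y. now rewrite (proj2 (Nat.ltb_lt k (length s))) by lia.
  - intros [t ->] Y HY k Hk. rewrite HY by (rewrite length_app, length_prefix; lia).
    rewrite app_nth1 by (now rewrite length_prefix). now apply nth_prefix.
Qed.

Lemma prefix_test_open X i : is_open (prefix_test X i).
Proof. intros Y HY. exists i. intros Z HZ k Hk. rewrite HZ by assumption. auto. Qed.

Fixpoint strings_of_length (n : nat) : list (list bool) :=
  match n with
  | 0 => [[]]
  | S n => map (cons true) (strings_of_length n) ++ map (cons false) (strings_of_length n)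
  end.

Lemma length_strings_of_length n : length (strings_of_length n) = 2 ^ n.
Proof. induction n; simpl; [reflexivity|]. rewrite length_app, !length_map, IHn. lia. Qed.

Lemma in_strings_of_length s : In s (strings_of_length (length s)).
Proof.
  induction s as [|[] s IH]; simpl; [now left|..]; apply in_or_app;
    [left | right]; now apply in_map.
Qed.

Lemma prefix_test_measure X i : measure_open_le_pow2 (prefix_test X i) i.
Proof.
  intros n L HL Hs.
  assert (Hext : forall s, In s L -> length s = n /\ s = prefix X i ++ skipn i s).
  { intros s Hin. destruct (Hs s Hin) as [Hn Hsub]. split; [exact Hn|].
    apply subset_cyl_prefix_test in Hsub as [t ->]. f_equal.
    rewrite skipn_app, length_prefix, Nat.sub_diag, <- (length_prefix X i) at 1.
    now rewrite skipn_all. }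
  destruct (le_lt_dec i n) as [Hin | Hni].
  - assert (HN : NoDup (map (skipn i) L)).
    { apply NoDup_map_NoDup_ForallPairs; [|exact HL]. intros a b Ha Hb Hab.
      now rewrite (proj2 (Hext a Ha)), (proj2 (Hext b Hb)), Hab. }
    assert (Hinc : incl (map (skipn i) L) (strings_of_length (n - i))).
    { intros t Ht. apply in_map_iff in Ht as [s [<- Hs']].
      replace (n - i) with (length (skipn i s))
        by now rewrite length_skipn, (proj1 (Hext s Hs')).
      apply in_strings_of_length. }
    pose proof (NoDup_incl_length HN Hinc) as Hle.
    rewrite length_map, length_strings_of_length in Hle.
    replace (2 ^ n) with (2 ^ (n - i) * 2 ^ i) by (rewrite <- Nat.pow_add_r; f_equal; lia).
    now apply Nat.mul_le_mono_r.
  - destruct L as [|s L]; [simpl; lia|]. exfalso.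
    destruct (Hext s (or_introl eq_refl)) as [Hn Hs'].
    apply (f_equal (@length bool)) in Hs'. rewrite length_app, length_prefix in Hs'. lia.
Qed.

Section ComputableSequence.
Variables (Phi : prf) (q : baire) (X : cantor).
Hypothesis Phi_computes_q : tf Phi zero_oracle q.
Hypothesis q_names_X : forall n, q n = b2n (X n).

(* By [code_app], [c] codes an extension of [prefix X i] iff this vanishes at
   [<<i, c>, d>] for some [d]. *)
Definition extension_gap (z : nat) : nat :=
  let a := fst (prefix_code q (cfst (cfst z))) + snd (prefix_code q (cfst (cfst z))) * csnd z in
  (csnd (cfst z) - a) + (a - csnd (cfst z)).

Definition PExtensionGap : prf :=
  let PCode := PComp (PPrefixCode Phi) (PComp PFst PFst) in
  PComp PDist
    (PPair (PComp PSnd PFst)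
       (PComp PAdd (PPair (PComp PFst PCode) (PComp PMul (PPair (PComp PSnd PCode) PSnd))))).

Lemma tf_extension_gap : tf PExtensionGap zero_oracle extension_gap.
Proof. unfold PExtensionGap. tf_program. now autorewrite with cpair. Qed.

Lemma extension_gap_eq0 m d :
  extension_gap (cpair m d) = 0 <-> csnd m = code (prefix X (cfst m)) + 2 ^ cfst m * d.
Proof.
  unfold extension_gap. autorewrite with cpair.
  rewrite (prefix_code_spec _ X) by assumption. cbn [fst snd]. lia.
Qed.

Lemma prefix_test_ce :
  ce (fun m => exists i s, m = cpair i (code s) /\ subset (cyl s) (prefix_test X i)).
Proof.
  exists (PMu PExtensionGap). intro m.
  rewrite (eval_mu_iff zero_oracle _ _ m tf_extension_gap). split.
  - intros [i [s [-> Hsub]]]. apply subset_cyl_prefix_test in Hsub as [t ->].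
    exists (code t). apply extension_gap_eq0. autorewrite with cpair.
    now rewrite code_app, length_prefix.
  - intros [d Hd]. apply extension_gap_eq0 in Hd. destruct (code_surj d) as [t <-].
    exists (cfst m), (prefix X (cfst m) ++ t). split.
    + now rewrite code_app, length_prefix, <- Hd, cpair_surj.
    + apply subset_cyl_prefix_test. eauto.
Qed.

Lemma prefix_test_ML : ML_test (prefix_test X).
Proof.
  split; [|split].
  - apply prefix_test_open.
  - apply prefix_test_ce.
  - apply prefix_test_measure.
Qed.

Lemma computable_not_MLR : ~ MLR X.
Proof. intro HX. apply (HX _ prefix_test_ML). now intros i k _. Qed.

End ComputableSequence.

(** * No reduction of C_N to LAY_U *)

Lemma rep_MLR_functional q X X' : rep_MLR q X -> rep_MLR q X' -> X = X'.
Proof.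
  intros [_ HX] [_ HX']. apply functional_extensionality. intro n.
  specialize (HX n). rewrite HX' in HX. now destruct (X n), (X' n).
Qed.

Lemma CN_not_W_LAY U : ML_test U ->
  ~ W_le rep_baire rep_nat CN_dom CN rep_MLR rep_nat LAY_dom (LAY U).
Proof.
  intros HU [Phi [Psi HW]].
  set (layer := fun X : cantor => epsilon (inhabits 0) (fun i => ~ U i X)).
  set (G := fun q s : baire =>
    exists X, rep_MLR q X /\ s = fun m => if Nat.eqb m (layer X) then 1 else 0).
  assert (G_realizer : is_realizer rep_MLR rep_nat LAY_dom (LAY U) G).
  { split.
    - intros q s s' [X [HX ->]] [X' [HX' ->]]. now rewrite (rep_MLR_functional _ _ _ HX HX').
    - intros q X HX HXrandom. split.
      + eexists. exists X. split; [exact HX | reflexivity].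
      + intros s [X' [HX' ->]]. rewrite (rep_MLR_functional _ _ _ HX' HX).
        exists (layer X). split; [now intro m|].
        apply epsilon_spec. now apply MLR_escapes_test. }
  assert (zero_in_dom : CN_dom zero_oracle) by now exists 0.
  (* Psi is never reached: Phi already turns the computable input into an ML-random name. *)
  destruct (HW G G_realizer zero_oracle zero_oracle eq_refl zero_in_dom)
    as [[r [q [s [Hq [[X [[HX Hname] _]] _]]]]] _].
  exact (computable_not_MLR Phi q X Hq Hname HX).
Qed.

Theorem proposition5p12 (U : nat -> cantor -> Prop) :
  universal_ML_test U ->
  sW_le rep_MLR rep_nat LAY_dom (LAY U) rep_baire rep_nat CN_dom CN /\
  ~ W_le rep_baire rep_nat CN_dom CN rep_MLR rep_nat LAY_dom (LAY U).
Proof.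
  intros [HU _]. split; [apply LAY_sW_CN | apply CN_not_W_LAY]; exact HU.
Qed.
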